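(* Let $d\ge 3$ and let $A$ be a $d$-dimensional $(0,1)$-matrix of order $4$ equivalent to $\mathcal{M}_4^d$, with (unique) block-permutation parameters $(\mathcal{E},\lambda,s)$, $\mathcal{E}=(\varepsilon_1,\dots,\varepsilon_d)$, where exactly $k$ of the $\varepsilon_i$ equal $2$. (1) If $0\le k<d$, then every filled subcube of $\mathcal{M}_4^d$ intersects exactly $2^{d-k-1}$ filled subcubes of $A$, and each such intersection is a $k$-dimensional submatrix of order $2$ (a set of the form $T_1\times\dots\times T_d$ with exactly $k$ of the $T_i$ of size $2$ and the others of size $1$). (2) If $k=d$ and $s=0$, then the filled subcubes of $A$ coincide with the filled subcubes of $\mathcal{M}_4^d$; if $k=d$ and $s=1$, then no filled subcube of $A$ intersects any filled subcube of $\mathcal{M}_4^d$.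
   Context: $\mathcal{M}_4^d$ has entry $1$ at $\alpha$ iff $\alpha_1+\dots+\alpha_d\equiv0\pmod 4$. Equivalence: permuting coordinate positions and/or applying a permutation of $\{0,1,2,3\}$ to a single coordinate, repeatedly. Define $p_1,p_2,p_3:\{0,1,2,3\}\to\{0,1\}$ by $p_1(0)=p_1(1)=0,\ p_1(2)=p_1(3)=1$; $p_2(0)=p_2(2)=0,\ p_2(1)=p_2(3)=1$; $p_3(0)=p_3(3)=0,\ p_3(1)=p_3(2)=1$; and $\mu_1(0)=\mu_1(2)=0,\ \mu_1(1)=\mu_1(3)=1$; $\mu_2(0)=\mu_2(1)=0,\ \mu_2(2)=\mu_2(3)=1$; $\mu_3(0)=\mu_3(2)=0,\ \mu_3(1)=\mu_3(3)=1$. $Q_s^d=\{y\in\{0,1\}^d:w(y)\equiv s\pmod 2\}$ ($w$ = Hamming weight). For $\mathcal{E}\in\{1,2,3\}^d$, $s\in\{0,1\}$, $\lambda:Q_s^d\to\{0,1\}$, the block permutation with parameters $(\mathcal{E},\lambda,s)$ is the $(0,1)$-matrix with entry $1$ at $\alpha$ iff $\bigoplus_i p_{\varepsilon_i}(\alpha_i)=s$ and $\bigoplus_i\mu_{\varepsilon_i}(\alpha_i)\oplus\lambda(p_{\varepsilon_1}(\alpha_1),\dots,p_{\varepsilon_d}(\alpha_d))=0$. Every matrix equivalent to $\mathcal{M}_4^d$ ($d\ge3$) is a block permutation for a unique parameter triple; in particular $\mathcal{M}_4^d$ has parameters $((2,\dots,2),\lambda_M,0)$ with $\lambda_M(x)=0$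 iff $w(x)\equiv0\pmod 4$. For a block permutation with parameters $(\mathcal{E},\lambda,s)$, its subcubes are $C_y=\{\alpha:p_{\varepsilon_i}(\alpha_i)=y_i\ \forall i\}$, $y\in\{0,1\}^d$, and $C_y$ is filled if $w(y)\equiv s\pmod 2$. *)

From Stdlib Require Import Relation_Operators.
From mathcomp Require Import all_boot all_order all_fingroup.
Set Implicit Arguments. Unset Strict Implicit. Unset Printing Implicit Defensive.

Definition cell (d : nat) := {ffun 'I_d -> 'I_4}.
Definition mat (d : nat) := {ffun cell d -> bool}.

Definition M4 (d : nat) : mat d :=
  [ffun a : cell d => (\sum_(i < d) (a i : nat)) %% 4 == 0].

Definition permute_pos d (sigma : {perm 'I_d}) (a : cell d) : cell d :=
  [ffun i => a (sigma i)].
Definition permute_val d (i : 'I_d) (tau : {perm 'I_4}) (a : cell d) : cell d :=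
  [ffun j => if j == i then tau (a j) else a j].

Inductive equiv_step d (A B : mat d) : Prop :=
| ES_pos (sigma : {perm 'I_d}) :
    B = [ffun a => A (permute_pos sigma a)] -> equiv_step A B
| ES_val (i : 'I_d) (tau : {perm 'I_4}) :
    B = [ffun a => A (permute_val i tau a)] -> equiv_step A B.

Definition equivalent d (A B : mat d) : Prop :=
  clos_refl_trans (mat d) (@equiv_step d) A B.

(* p_1, p_2, p_3 (false = 0, true = 1); other indices are unused. *)
Definition p_ (e : nat) (x : 'I_4) : bool :=
  match e with
  | 1 => 2 <= x
  | 2 => odd x
  | 3 => (x == 1 :> nat) || (x == 2 :> nat)
  | _ => false
  end.
Definition mu_ (e : nat) (x : 'I_4) : bool :=
  match e with
  | 1 => odd x
  | 2 => 2 <= x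
  | 3 => odd x
  | _ => false
  end.

Definition weight d (y : {ffun 'I_d -> bool}) : nat := #|[set i | y i]|.

(* Block permutation with parameters (E, lambda, s).  lambda is given as a
   total function; only its values on Q_s^d matter. *)
Definition blockperm d (E : 'I_d -> nat) (lam : {ffun 'I_d -> bool} -> bool)
  (s : bool) : mat d :=
  [ffun a : cell d =>
     (\big[xorb/false]_(i < d) p_ (E i) (a i) == s) &&
     (xorb (\big[xorb/false]_(i < d) mu_ (E i) (a i))
           (lam [ffun i => p_ (E i) (a i)]) == false)].

Definition subcube d (E : 'I_d -> nat) (y : {ffun 'I_d -> bool}) : {set cell d} :=
  [set a : cell d | [forall i, p_ (E i) (a i) == y i]].

Definition filled d (s : bool) (y : {ffun 'I_d -> bool}) : bool :=
  odd (weight y) == s.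

(* parameters of M_4^d: E = (2,...,2), s = 0 *)
Definition E_M (d : nat) : 'I_d -> nat := fun _ => 2.
Arguments E_M : clear implicits.

From Stdlib Require Import Relation_Operators.
From mathcomp Require Import all_boot all_order.
Set Implicit Arguments. Unset Strict Implicit. Unset Printing Implicit Defensive.

(* Since p_2 is the parity map, the subcubes of M_4^d are cut out by the
   parities of the coordinates.  On a coordinate with e_i = 2 the constraints
   of C_z (for A) and C_y (for M_4^d) coincide, so they meet only if
   z_i = y_i, and then leave 2 values; on a coordinate with e_i <> 2 the pair
   (p_(e_i), parity) is a bijection from {0,1,2,3} onto bool * bool, so exactly
   one value is left.  Hence C_z meets C_y iff z agrees with y on the k
   coordinates with e_i = 2, in which case the intersection is a product of
   k sets of size 2 and d - k singletons; among the z of a fixed parity,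
   exactly half of the 2^(d-k) such z qualify when k < d. *)

Lemma card_p_odd (e : nat) (b c : bool) : 1 <= e <= 3 ->
  #|[set x : 'I_4 | (p_ e x == b) && (odd x == c)]| =
  if e == 2 then (if b == c then 2 else 0) else 1.
Proof.
move=> He; rewrite -sum1_card big_mkcond /= !big_ord_recl big_ord0 /= !inE /=.
by case: e He => [|[|[|[|e]]]] //= _; case: b; case: c.
Qed.

Section Subcubes.

Variables (d : nat) (E : 'I_d -> nat).

Definition meet_fiber (z y : {ffun 'I_d -> bool}) (i : 'I_d) : {set 'I_4} :=
  [set x : 'I_4 | (p_ (E i) x == z i) && (odd x == y i)].

Lemma subcube_meetE z y :
  subcube E z :&: subcube (E_M d) y =
  [set a : cell d | [forall i, a i \in meet_fiber z y i]].
Proof.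
apply/setP=> a; rewrite !inE; apply/andP/forallP => [[/forallP Hz /forallP Hy] i | H].
  by rewrite inE Hz; exact: Hy.
by split; apply/forallP => i; move: (H i); rewrite inE => /andP[].
Qed.

Lemma subcube_meet_eq0 z z' : z != z' -> subcube E z :&: subcube E z' = set0.
Proof.
move=> neq_zz'; apply/setP => a; rewrite !inE; apply/negbTE.
apply: contra neq_zz' => /andP[/forallP Hz /forallP Hz'].
by apply/eqP/ffunP => i; rewrite -(eqP (Hz i)) (eqP (Hz' i)).
Qed.

Lemma subcube_E_M : (forall i, E i = 2) -> subcube E =1 subcube (E_M d).
Proof.
by move=> E2 z; apply/setP => a; rewrite !inE; apply: eq_forallb => i; rewrite E2.
Qed.

Hypothesis E_range : forall i, 1 <= E i <= 3.

Lemma card_meet_fiber z y i :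
  #|meet_fiber z y i| = if E i == 2 then (if z i == y i then 2 else 0) else 1.
Proof. exact: card_p_odd. Qed.

Lemma subcube_meet_neq0 z y :
  (subcube E z :&: subcube (E_M d) y != set0) =
  [forall i, (E i == 2) ==> (z i == y i)].
Proof.
rewrite subcube_meetE; apply/set0Pn/forallP => [[a] | agree].
  rewrite inE => /forallP Ha i; apply/implyP => E2.
  by move: (Ha i); rewrite inE (eqP E2) /= => /andP[/eqP <- /eqP <-].
have fiber_ne0 i : meet_fiber z y i != set0.
  by rewrite -card_gt0 card_meet_fiber; move: (agree i); case: (E i == 2) => //= ->.
exists [ffun i => odflt ord0 [pick x in meet_fiber z y i]]; rewrite inE.
apply/forallP => i; rewrite ffunE; case: pickP => [x -> // | none].
by case/set0Pn: (fiber_ne0 i) => x; rewrite none.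
Qed.

End Subcubes.

Lemma card_set_not d (P : pred 'I_d) : #|[set i | ~~ P i]| = d - #|[set i | P i]|.
Proof.
rewrite -[X in X - _](card_ord d) -(cardsC [set i | P i]) addKn.
by apply: eq_card => i; rewrite !inE.
Qed.

Section ParityCount.

Variable d : nat.
Implicit Types (y z : {ffun 'I_d -> bool}) (P : pred 'I_d).

Definition flip_at (j : 'I_d) z : {ffun 'I_d -> bool} :=
  [ffun i => if i == j then ~~ z i else z i].

Lemma flip_atK j : involutive (flip_at j).
Proof. by move=> z; apply/ffunP => i; rewrite !ffunE; case: eqP => // _; exact: negbK. Qed.

Lemma odd_weight_flip j z : odd (weight (flip_at j z)) = ~~ odd (weight z).
Proof.
rewrite /weight (cardsD1 j [set i | flip_at j z i]) (cardsD1 j [set i | z i]).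
have -> : [set i | flip_at j z i] :\ j = [set i | z i] :\ j.
  by apply/setP=> i; rewrite !inE ffunE; case: eqP.
by rewrite !inE ffunE eqxx !oddD; case: (z j); rewrite /= ?negbK; case: (odd _).
Qed.

Definition agree_on P y := [set z : {ffun 'I_d -> bool} | [forall i, P i ==> (z i == y i)]].

Lemma card_agree_on P y : #|agree_on P y| = 2 ^ #|[set i | ~~ P i]|.
Proof.
pose F i := if P i then pred1 (y i) else predT.
have -> : #|agree_on P y| = #|(family F : simpl_pred {dffun forall i : 'I_d, bool})|.
  apply: eq_card => z; rewrite inE; apply/forallP/familyP => H i;
  by move: (H i); rewrite /F; case: (P i).
rewrite card_family foldrE big_image /= -prod_nat_const [RHS]big_mkcond /=.
apply: eq_bigr => i _; rewrite /F inE; case: (P i) => /=; first by rewrite card1.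
by rewrite -card_bool; apply: eq_card.
Qed.

(* Flipping a free coordinate j is a bijection between the two parity classes. *)
Lemma card_agree_on_parity P y (s : bool) j : ~~ P j ->
  #|[set z in agree_on P y | odd (weight z) == s]| = 2 ^ (#|[set i | ~~ P i]| - 1).
Proof.
move=> free_j; set S := agree_on P y; set B := [set z : {ffun 'I_d -> bool} | odd (weight z) == s].
have S_flip z : (flip_at j z \in S) = (z \in S).
  rewrite !inE; apply: eq_forallb => i; rewrite ffunE.
  by case: (i =P j) => // ->; rewrite (negbTE free_j).
have flip_SB : flip_at j @: (S :&: B) = S :\: B.
  apply/setP => z; apply/imsetP/idP => [[w Hw ->] | Hz].
    move: Hw; rewrite in_setI in_setD S_flip !inE odd_weight_flip.
    by case/andP=> -> /eqP <-; case: (odd _).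
  exists (flip_at j z); last by rewrite flip_atK.
  move: Hz; rewrite in_setI in_setD S_flip !inE odd_weight_flip.
  by case/andP=> + ->; case: (odd _); case: (s).
have := cardsID B S; rewrite -flip_SB card_imset; last exact: can_inj (flip_atK j).
have -> : [set z in S | odd (weight z) == s] = S :&: B by apply/setP => z; rewrite !inE.
rewrite card_agree_on; have : 0 < #|[set i | ~~ P i]| by apply/card_gt0P; exists j; rewrite inE.
case: #|_| => // n _; rewrite subn1 /= expnS addnn -mul2n => /eqP.
by rewrite eqn_mul2l => /eqP.
Qed.

End ParityCount.

Theorem mainTheorem11 (d : nat) (A : mat d) (E : 'I_d -> nat)
  (lam : {ffun 'I_d -> bool} -> bool) (s : bool) :
  3 <= d ->
  equivalent (M4 d) A ->
  (forall i, 1 <= E i <= 3) ->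
  A = blockperm E lam s ->
  let k := #|[set i | E i == 2]| in
  (k < d ->
     forall y : {ffun 'I_d -> bool}, filled false y ->
       #|[set z : {ffun 'I_d -> bool} | filled s z &&
            (subcube E z :&: subcube (E_M d) y != set0)]| = (2 ^ (d - k - 1))%N
       /\ (forall z : {ffun 'I_d -> bool}, filled s z ->
             subcube E z :&: subcube (E_M d) y != set0 ->
             exists T : 'I_d -> {set 'I_4},
               subcube E z :&: subcube (E_M d) y = [set a : cell d | [forall i, a i \in T i]]
               /\ (forall i, (#|T i| == 1) || (#|T i| == 2))
               /\ #|[set i | #|T i| == 2]| = k))
  /\ (k = d -> s = false ->
        [set subcube E z | z in [set z | filled s z]]
        = [set subcube (E_M d) y | y in [set y | filled false y]])
  /\ (k = d -> s = true ->
        forall z y : {ffun 'I_d -> bool}, filled s z -> filled false y ->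
          subcube E z :&: subcube (E_M d) y = set0).
Proof.
move=> _ _ E_range _ k.
have card_not2 : #|[set i | E i != 2]| = d - k by rewrite card_set_not.
have all2 : k = d -> forall i, E i = 2.
  move=> kd i; apply/eqP; apply: contraT => Ei.
  have : #|[set i | E i != 2]| == 0 by rewrite card_not2 kd subnn.
  by rewrite cards_eq0 => /eqP/setP/(_ i); rewrite !inE Ei.
split; [move=> lt_kd y _; split | split => kd ->].
- have [j Ej] : exists j, E j != 2.
    have : 0 < #|[set i | E i != 2]| by rewrite card_not2 subn_gt0.
    by case/card_gt0P => j; rewrite inE; exists j.
  rewrite -card_not2 -(card_agree_on_parity y s Ej).
  by apply: eq_card => z; rewrite !inE subcube_meet_neq0 // andbC.
- move=> z _ meet_ne0; exists (meet_fiber E z y); split; first exact: subcube_meetE.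
  move: meet_ne0; rewrite subcube_meet_neq0 // => /forallP agree.
  split=> [i | ]; last apply: eq_card => i; rewrite ?inE card_meet_fiber //;
  by move: (agree i); case: (E i == 2) => //= ->.
- by apply: eq_imset; exact: subcube_E_M (all2 kd).
- move=> z y odd_z even_y; rewrite -(subcube_E_M (all2 kd) y).
  apply: subcube_meet_eq0; apply: contraTneq odd_z => ->.
  by rewrite /filled (eqP even_y).
Qed.
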